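(* For every $n\ge 1$, the symmetric group $S_n$ has a mixing sequence consisting of involutions of length at most $\frac{3}{2}\lfloor\log_2(n!)\rfloor+\frac{1}{2}n$; in particular $\mathrm{mixlen}(S_n)\le \frac{3}{2}\lfloor\log_2(n!)\rfloor+\frac{1}{2}n$.
   Context: For a finite group $G$, a random subproduct is a random element $g_1^{\epsilon_1}\cdots g_k^{\epsilon_k}$ where $g_1,\dots,g_k\in G$ are fixed and $\epsilon_1,\dots,\epsilon_k$ are independent Bernoulli random variables with $\epsilon_i\sim\mathrm{Ber}(p_i)$, $p_i\in[0,1]$. If such a random subproduct is distributed exactly uniformly on $G$, then $(g_1,p_1),\dots,(g_k,p_k)$ is a mixing sequence of $G$ of length $k$, and $G$ is mixable. The mixing length $\mathrm{mixlen}(G)$ is the minimal length of a mixing sequence of $G$. *)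

From mathcomp Require Import all_boot all_order all_algebra all_fingroup.
From mathcomp Require Import Rstruct.
From Stdlib Require Import Reals.
Set Implicit Arguments. Unset Strict Implicit. Unset Printing Implicit Defensive.
Import GRing.Theory Num.Theory.
Local Open Scope ring_scope.

Definition subprod (gT : finGroupType) (s : seq (gT * R))
  (e : {ffun 'I_(size s) -> bool}) : gT :=
  (\prod_(i < size s) (if e i then (nth (1%g, 0) s i).1 else 1%g))%g.

Definition outcome_prob (gT : finGroupType) (s : seq (gT * R))
  (e : {ffun 'I_(size s) -> bool}) : R :=
  \prod_(i < size s) (if e i then (nth (1%g, 0) s i).2 else 1 - (nth (1%g, 0) s i).2).

Definition subprod_prob (gT : finGroupType) (s : seq (gT * R)) (g : gT) : R :=
  \sum_(e : {ffun 'I_(size s) -> bool} | @subprod gT s e == g) @outcome_prob gT s e.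

Definition mixing_seq (gT : finGroupType) (s : seq (gT * R)) : Prop :=
  (forall x, x \in s -> 0 <= x.2 <= 1) /\
  (forall g : gT, subprod_prob s g = 1 / (#|[set: gT]|)%:R).

(* The pointwise stabilisers S_M of {M, ..., n-1} form a chain
   1 = S_0 <= S_1 <= ... <= S_n = 'S_n.  If a random subproduct is uniform on
   S_M, appending a random subproduct with factors in S_{M+1} that sends the
   point M to a uniform point of [0, M] makes it uniform on S_{M+1}, because
   the right cosets of S_M in S_{M+1} are the sets {g | g M = i}.
   Such a sequence of involutions is built by halving: for M = 2k, run the
   sequence for k on the pairs {2i, 2i+1}, keeping the parity, then swap each
   pair with probability 1/2; for M = 2k+1, first swap M-2 and M-1 with
   probability 2k/(2k+1), then run the sequence for 2k, which fixes 2k.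
   Its length l satisfies l(2k) = l(k) + 1 and l(2k+1) = l(k) + 2, whence
   2 sum_{M<=n} l(M) <= 3 sum_{M<=n} floor(log2 M) + n <= 3 floor(log2 n!) + n. *)

From mathcomp Require Import all_boot all_order all_algebra all_fingroup.
From mathcomp Require Import Rstruct.
From Stdlib Require Import Reals.
From Stdlib Require List.
From mathcomp Require Import cyclic zify ring lra.
Set Implicit Arguments. Unset Strict Implicit. Unset Printing Implicit Defensive.
Import GRing.Theory Num.Theory.
Local Open Scope ring_scope.

(** * Distribution of a random subproduct *)

Definition ffun_cons k (b : bool) (e : {ffun 'I_k -> bool}) : {ffun 'I_k.+1 -> bool} :=
  [ffun i => if unlift ord0 i is Some j then e j else b].

Lemma ffun_cons0 k b (e : {ffun 'I_k -> bool}) : ffun_cons b e ord0 = b.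
Proof. by rewrite ffunE unlift_none. Qed.

Lemma ffun_consS k b (e : {ffun 'I_k -> bool}) i : ffun_cons b e (lift ord0 i) = e i.
Proof. by rewrite ffunE liftK. Qed.

Lemma big_ffun_ord_recl k (F : {ffun 'I_k.+1 -> bool} -> R) :
  \sum_(e : {ffun 'I_k.+1 -> bool}) F e =
  \sum_(b : bool) \sum_(e : {ffun 'I_k -> bool}) F (ffun_cons b e).
Proof.
rewrite pair_big (reindex (fun be => ffun_cons be.1 be.2)) //=.
exists (fun e : {ffun 'I_k.+1 -> bool} => (e ord0, [ffun j => e (lift ord0 j)])).
  move=> [b e] _ /=.
  by rewrite ffun_cons0; congr pair; apply/ffunP => j; rewrite ffunE ffun_consS.
move=> e _; apply/ffunP => i; rewrite ffunE.
by case: unliftP => [j ->|->]; rewrite ?ffunE.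
Qed.

Section SubproductDistribution.
Variable gT : finGroupType.
Implicit Types (s : seq (gT * R)) (a g : gT) (p : R).

Lemma subprod_cons a p s b e :
  @subprod _ ((a, p) :: s) (ffun_cons b e) =
  ((if b then a else 1) * @subprod _ s e)%g.
Proof.
rewrite /subprod big_ord_recl ffun_cons0; congr (_ * _)%g.
by apply: eq_bigr => i _; rewrite ffun_consS.
Qed.

Lemma outcome_prob_cons a p s b e :
  @outcome_prob _ ((a, p) :: s) (ffun_cons b e) =
  (if b then p else 1 - p) * @outcome_prob _ s e.
Proof.
rewrite /outcome_prob big_ord_recl ffun_cons0; congr (_ * _).
by apply: eq_bigr => i _; rewrite ffun_consS.
Qed.

Lemma subprod_prob_nil g : subprod_prob [::] g = (g == 1%g)%:R.
Proof.
have e0 (e : {ffun 'I_0 -> bool}) : e = [ffun=> false] by apply/ffunP => -[].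
rewrite /subprod_prob (eq_bigl (fun e => (e == [ffun=> false]) && (g == 1%g))) => [|e].
  case: (eqVneq g 1%g) => [_|_]; last by rewrite big_pred0 // => e; rewrite andbF.
  rewrite (eq_bigl (pred1 [ffun=> false])) => [|e]; last by rewrite andbT.
  by rewrite big_pred1_eq /outcome_prob big_ord0.
by rewrite /subprod big_ord0 (e0 e) eqxx eq_sym.
Qed.

Lemma subprod_prob_cons a p s g :
  subprod_prob ((a, p) :: s) g =
  (1 - p) * subprod_prob s g + p * subprod_prob s (a^-1 * g)%g.
Proof.
have mulg_eqV x : ((a * x)%g == g) = (x == (a^-1 * g)%g).
  by apply/eqP/eqP => [<-|->]; rewrite ?mulKg ?mulKVg.
rewrite /subprod_prob big_mkcond (big_ffun_ord_recl (k := size s)) big_bool.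
rewrite !(big_mkcond (fun e => _ == _)) !big_distrr /= addrC.
congr (_ + _); apply: eq_bigr => e _; rewrite subprod_cons outcome_prob_cons.
  by rewrite mul1g; case: ifP; rewrite ?mulr0.
by rewrite mulg_eqV; case: ifP; rewrite ?mulr0.
Qed.

Lemma subprod_prob_cat s1 s2 g :
  subprod_prob (s1 ++ s2) g =
  \sum_k subprod_prob s1 (g * k^-1)%g * subprod_prob s2 k.
Proof.
elim: s1 g => [|[a p] s1 IH] g /=.
  rewrite (bigD1 g) //= big1 => [|k /negbTE ngk]; last first.
    by rewrite subprod_prob_nil -eq_mulgV1 eq_sym ngk mul0r.
  by rewrite subprod_prob_nil mulgV eqxx mul1r addr0.
rewrite subprod_prob_cons !IH !mulr_sumr -big_split /=.
by apply: eq_bigr => k _; rewrite subprod_prob_cons mulgA; ring.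
Qed.

Lemma subprod_prob_sum s : \sum_g subprod_prob s g = 1.
Proof.
elim: s => [|[a p] s IH].
  rewrite (bigD1 1%g) //= big1 => [|g /negbTE ng1]; last by rewrite subprod_prob_nil ng1.
  by rewrite subprod_prob_nil eqxx addr0.
under eq_bigr do rewrite subprod_prob_cons.
rewrite big_split /= -!mulr_sumr IH (reindex_inj (mulgI a)) /=.
by under eq_bigr do rewrite mulKg; rewrite IH; ring.
Qed.

Lemma subprod_prob_out (H : {group gT}) s g :
  all (fun x => x.1 \in H) s -> g \notin H -> subprod_prob s g = 0.
Proof.
elim: s g => [|[a p] s IH] g /=.
  by move=> _ gH; rewrite subprod_prob_nil; case: eqP gH => // ->; rewrite group1.
case/andP=> aH sH gH; rewrite subprod_prob_cons !IH ?groupMl ?groupV //; ring.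
Qed.

Lemma subprod_prob_cat_rcoset (H : {group gT}) c s1 s2 g :
  (forall h, subprod_prob s1 h = c * (h \in H)%:R) ->
  subprod_prob (s1 ++ s2) g = c * \sum_(k in (H :* g)%g) subprod_prob s2 k.
Proof.
move=> unifH; rewrite subprod_prob_cat [in RHS]big_mkcond mulr_sumr.
apply: eq_bigr => k _.
rewrite unifH mem_rcoset -groupV invMg invgK.
by case: ifP => _; rewrite /= ?mulr1n ?mulr0n ?mulr1 ?mulr0 ?mul0r.
Qed.

Lemma mixing_seq_const s c :
  (forall x, x \in s -> 0 <= x.2 <= 1) -> (forall g, subprod_prob s g = c) ->
  mixing_seq s.
Proof.
move=> s01 constc; split=> // g.
have card_gt0 : #|gT|%:R != 0 :> R.
  by rewrite pnatr_eq0 -lt0n; apply/card_gt0P; exists 1%g.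
have c_card : c * #|gT|%:R = 1.
  rewrite mulr_natr -[RHS](subprod_prob_sum s) -sumr_const.
  by apply: eq_bigr => h _; rewrite constc.
rewrite constc cardsT; apply: (mulIf card_gt0).
by rewrite c_card div1r mulVf.
Qed.

End SubproductDistribution.

(** * Random walks of a point of [nat] *)

(* No result type: [: R] would make Rocq parse the body in Stdlib's [R_scope]. *)
Fixpoint walk_prob (W : seq ((nat -> nat) * R)) (x y : nat) :=
  if W is (f, p) :: W' then (1 - p) * walk_prob W' x y + p * walk_prob W' (f x) y
  else (x == y)%:R.

Lemma walk_prob_fixed W x y :
  List.Forall (fun fp => fp.1 x = x) W -> walk_prob W x y = (x == y)%:R.
Proof. by elim=> //= -[f p] W0 /= -> _ ->; ring. Qed.

Lemma walk_prob_rcons W f p x y : involutive f ->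
  walk_prob (rcons W (f, p)) x y =
  (1 - p) * walk_prob W x y + p * walk_prob W x (f y).
Proof.
move=> finv; elim: W x => [|[g q] W IH] x /=; last by rewrite !IH; ring.
by rewrite (inv_eq finv).
Qed.

Definition lift_map (f : nat -> nat) (x : nat) : nat := odd x + (f x./2).*2.

Definition lift_walk (W : seq ((nat -> nat) * R)) : seq ((nat -> nat) * R) :=
  [seq (lift_map fp.1, fp.2) | fp <- W].

Lemma lift_mapE f (b : bool) x : lift_map f (b + x.*2) = (b + (f x).*2)%nat.
Proof. by rewrite /lift_map oddD odd_double addbF oddb half_bit_double. Qed.

Lemma eq_bit_double (b c : bool) x y :
  ((b + x.*2)%nat == (c + y.*2)%nat) = (b == c) && (x == y).
Proof.
apply/eqP/andP => [e|[/eqP-> /eqP->]] //.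
have bc : b = c by have := congr1 odd e; rewrite !oddD !odd_double !addbF !oddb.
by move: e; rewrite bc => /addnI/double_inj->.
Qed.

Lemma walk_prob_lift W (b c : bool) x y :
  walk_prob (lift_walk W) (b + x.*2) (c + y.*2) = (b == c)%:R * walk_prob W x y.
Proof.
elim: W x => [|[f p] W IH] x /=; last by rewrite lift_mapE !IH; ring.
by rewrite eq_bit_double -mulnb natrM.
Qed.

(** * A walk spreading [M.-1] uniformly over [0, M) *)

Definition swap_nat (a b x : nat) : nat := if x == a then b else if x == b then a else x.

Definition pair_swap (k x : nat) : nat :=
  if (x./2 < k)%nat then (~~ odd x + (x./2).*2)%nat else x.

Fixpoint mixing_walk_rec (fuel M : nat) : seq ((nat -> nat) * R) :=
  if fuel is fuel'.+1 then
    if (M <= 1)%nat then [::]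
    else if odd M then
      (swap_nat M.-2 M.-1, M.-1%:R / M%:R) :: mixing_walk_rec fuel' M.-1
    else rcons (lift_walk (mixing_walk_rec fuel' M./2)) (pair_swap M./2, 2^-1)
  else [::].

Definition mixing_walk (M : nat) : seq ((nat -> nat) * R) := mixing_walk_rec M M.

Lemma mixing_walk_rec_fuel fuel1 fuel2 M :
  (M <= fuel1)%nat -> (M <= fuel2)%nat ->
  mixing_walk_rec fuel1 M = mixing_walk_rec fuel2 M.
Proof.
elim: fuel1 fuel2 M => [|fuel1 IH] [|fuel2] M //= M1 M2;
  try by have -> : M = 0%nat by lia.
by case: ifP => // M_gt1; case: ifP => _; rewrite (IH fuel2) //; lia.
Qed.

Lemma mixing_walk_odd k : (0 < k)%nat ->
  mixing_walk k.*2.+1 =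
  (swap_nat k.*2.-1 k.*2, k.*2%:R / k.*2.+1%:R) :: mixing_walk k.*2.
Proof.
move=> k_gt0; rewrite /mixing_walk /= odd_double /=.
by have -> : (k.*2 < 1)%nat = false by lia.
Qed.

Lemma mixing_walk_even k : (0 < k)%nat ->
  mixing_walk k.*2 = rcons (lift_walk (mixing_walk k)) (pair_swap k, 2^-1).
Proof.
move=> k_gt0; rewrite /mixing_walk {1}(_ : k.*2 = k.*2.-1.+1) /=; last by lia.
have -> : (k.*2 <= 1)%nat = false by lia.
by rewrite odd_double doubleK (@mixing_walk_rec_fuel _ k) //; lia.
Qed.

Lemma pos_double_ind (P : nat -> Prop) :
  P 1%nat -> (forall k, (0 < k)%nat -> P k -> P k.*2) ->
  (forall k, (0 < k)%nat -> P k.*2 -> P k.*2.+1) ->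
  forall M, (0 < M)%nat -> P M.
Proof.
move=> P1 Peven Podd; elim/ltn_ind => M IH M_gt0.
have [->|M_neq1] := eqVneq M 1%nat; first exact: P1.
have k_gt0 : (0 < M./2)%nat by lia.
rewrite -(odd_double_half M); case: (odd M); rewrite ?add1n ?add0n.
  by apply: Podd => //; apply: Peven => //; apply: IH; lia.
by apply: Peven => //; apply: IH; lia.
Qed.

Definition involution_step (M : nat) (fp : (nat -> nat) * R) :=
  [/\ involutive fp.1, forall x, (M <= x)%nat -> fp.1 x = x,
      exists x, fp.1 x <> x & 0 <= fp.2 <= 1].

Lemma involution_stepW M M' fp :
  (M <= M')%nat -> involution_step M fp -> involution_step M' fp.
Proof. by move=> MM' [finv ffix f_mov p01]; split=> // x Mx; apply: ffix; lia. Qed.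

Lemma involution_step_lift k fp :
  involution_step k fp -> involution_step k.*2 (lift_map fp.1, fp.2).
Proof.
case: fp => f p [/= finv ffix [x fx] p01]; split=> //=.
- by move=> y; rewrite -[y](odd_double_half y) !lift_mapE finv.
- by move=> y ky; rewrite -[y](odd_double_half y) lift_mapE ffix //; lia.
- by exists x.*2; rewrite /lift_map odd_double doubleK => /double_inj.
Qed.

Lemma involution_step_swap k : (0 < k)%nat ->
  involution_step k.*2.+1 (swap_nat k.*2.-1 k.*2, k.*2%:R / k.*2.+1%:R).
Proof.
move=> k_gt0; split=> /= [x|x kx|| ].
- rewrite /swap_nat; case: (eqVneq x k.*2.-1) => [->|x1].
    by rewrite eqxx; case: eqP => //; lia.
  case: (eqVneq x k.*2) => [->|x2]; first by rewrite eqxx.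
  by rewrite (negbTE x1) (negbTE x2).
- by rewrite /swap_nat; case: eqP => [|_]; [lia | case: eqP => //; lia].
- by exists k.*2; rewrite /swap_nat eqxx; case: eqP; lia.
- rewrite divr_ge0 ?ler0n //= ler_pdivrMr ?ltr0n // mul1r ler_nat; lia.
Qed.

Lemma pair_swapE k (b : bool) x :
  pair_swap k (b + x.*2) = if (x < k)%nat then (~~ b + x.*2)%nat else (b + x.*2)%nat.
Proof. by rewrite /pair_swap half_bit_double oddD odd_double addbF oddb. Qed.

Lemma pair_swap_invol k : involutive (pair_swap k).
Proof.
move=> x; rewrite -[x](odd_double_half x) !pair_swapE.
by case: ifP => xk; rewrite ?pair_swapE ?xk ?negbK.
Qed.

Lemma involution_step_pair_swap k : (0 < k)%nat ->
  involution_step k.*2 (pair_swap k, 2^-1).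
Proof.
move=> k_gt0; split=> /= [|x kx||]; first exact: pair_swap_invol.
- by rewrite /pair_swap ifF //; lia.
- by exists 0%nat; rewrite /pair_swap /= k_gt0.
- by rewrite invr_ge0 ler0n invf_le1 ?ltr0n // ler1n.
Qed.

Lemma mixing_walk_steps M : (0 < M)%nat ->
  List.Forall (involution_step M) (mixing_walk M).
Proof.
move: M; apply: pos_double_ind => [|k k_gt0 IH|k k_gt0 IH]; first by [].
- rewrite mixing_walk_even // -cats1 List.Forall_app List.Forall_map; split.
    by apply: List.Forall_impl IH => fp; apply: involution_step_lift.
  by constructor; [exact: involution_step_pair_swap | constructor].
- rewrite mixing_walk_odd //; constructor; first exact: involution_step_swap.
  by apply: List.Forall_impl IH => fp; apply: involution_stepW.
Qed.

Lemma walk_prob_mixing_walk M y : (0 < M)%nat ->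
  walk_prob (mixing_walk M) M.-1 y = (y < M)%:R / M%:R.
Proof.
move=> M_gt0; move: M M_gt0 y; apply: pos_double_ind => [y|k k_gt0 IH y|k k_gt0 IH y].
- by rewrite divr1 ltnS leqn0 eq_sym.
- have k_neq0 : k%:R != 0 :> R by rewrite pnatr_eq0 -lt0n.
  rewrite mixing_walk_even // walk_prob_rcons; last exact: pair_swap_invol.
  have -> : k.*2.-1 = (true + k.-1.*2)%nat by lia.
  rewrite -[y](odd_double_half y); move: (odd y) (y./2) => b h.
  rewrite pair_swapE -[k.*2]muln2 natrM.
  case: (ltnP h k) => hk; rewrite !walk_prob_lift !IH.
    have -> : (b + h.*2 < k * 2)%nat by lia.
    by rewrite hk; case: b => /=; field.
  have -> : (b + h.*2 < k * 2)%nat = false by lia.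
  by rewrite ltnNge hk /= !mul0r !mulr0 addr0.
- have K_gt0 : 0 < k.*2%:R :> R by rewrite ltr0n; lia.
  rewrite mixing_walk_odd //= /swap_nat ifF; last by apply/eqP; lia.
  rewrite eqxx IH walk_prob_fixed; last first.
    apply: List.Forall_impl (mixing_walk_steps _) => //; last lia.
    by move=> fp [_ fix_ge _ _]; apply: fix_ge.
  rewrite -addn1 natrD.
  case: (ltngtP y k.*2) => [lt|gt|->].
  + rewrite (_ : y < k.*2 + 1)%nat /=; last by lia.
    field; apply/andP; split; apply/eqP; lra.
  + rewrite (_ : y < k.*2 + 1 = false)%nat /=; last by lia.
    by rewrite !mul0r !mulr0 addr0.
  + rewrite (_ : k.*2 < k.*2 + 1)%nat /=; last by lia.
    field; apply/andP; split; apply/eqP; lra.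
Qed.

Lemma involution_step_lt M fp z :
  involution_step M fp -> (z < M)%nat -> (fp.1 z < M)%nat.
Proof.
case=> finv ffix _ _ zM; rewrite ltnNge; apply/negP => Mfz.
by have := ffix _ Mfz; rewrite finv => fz; move: Mfz; rewrite -fz leqNgt zM.
Qed.

(** * From involutions of [nat] to involutions in ['S_n] *)

(* The identity when [f] is not injective on ['I_n]. *)
Definition nat_perm n (f : nat -> nat) : 'S_n :=
  insubd (1%g : 'S_n) [ffun x : 'I_n => insubd x (f x)].

Lemma nat_permE n fp (x : 'I_n) :
  involution_step n fp -> nat_perm n fp.1 x = fp.1 x :> nat.
Proof.
move=> fstep; have [finv _ _ _] := fstep.
have fzE (z : 'I_n) : val (insubd z (fp.1 z)) = fp.1 z.
  by rewrite val_insubd (involution_step_lt fstep).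
have inj : injectiveb [ffun z : 'I_n => insubd z (fp.1 z)].
  apply/injectiveP => z1 z2; rewrite !ffunE => /(congr1 val).
  by rewrite !fzE => /(congr1 fp.1); rewrite !finv => /val_inj.
by rewrite -pvalE val_insubd inj ffunE fzE.
Qed.

Definition prefix_group n M : {group 'S_n} :=
  'C([set i : 'I_n | (M <= i)%nat] | 'P)%G.

Lemma prefix_groupP n M (g : 'S_n) :
  reflect (forall i : 'I_n, (M <= i)%nat -> g i = i) (g \in prefix_group n M).
Proof.
apply: (iffP astabP) => gfix i; first by move=> Mi; apply: gfix; rewrite inE.
by rewrite inE /= => /gfix.
Qed.

Lemma prefix_group_full n (g : 'S_n) : g \in prefix_group n n.
Proof. by apply/prefix_groupP => i; rewrite leqNgt ltn_ord. Qed.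

Lemma prefix_group0 n (g : 'S_n) : (g \in prefix_group n 0) = (g == 1%g).
Proof.
apply/prefix_groupP/eqP => [gfix|-> i _]; last by rewrite perm1.
by apply/permP => i; rewrite perm1 gfix.
Qed.

Lemma prefix_group_lt n M (g : 'S_n) (i : 'I_n) :
  g \in prefix_group n M -> (i < M)%nat -> (g i < M)%nat.
Proof.
move/prefix_groupP=> gfix iM; rewrite ltnNge; apply/negP => Mgi.
by have /perm_inj gi := gfix _ Mgi; move: Mgi; rewrite gi leqNgt iM.
Qed.

Lemma mem_rcoset_prefix_group n M (g k : 'S_n) (m : 'I_n) :
  val m = M -> k \in prefix_group n M.+1 ->
  (k \in prefix_group n M :* g)%g = (g \in prefix_group n M.+1) && (k m == g m).
Proof.
move=> mM /prefix_groupP kfix; rewrite mem_rcoset.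
apply/prefix_groupP/andP => [kg_fix|[/prefix_groupP gfix /eqP kgm] i Mi].
  have kg (i : 'I_n) : (M <= i)%nat -> k i = g i.
    by move=> Mi; have := kg_fix i Mi; rewrite permM => /(congr1 g); rewrite permKV.
  split; last by rewrite kg ?mM.
  by apply/prefix_groupP => i Mi; rewrite -kg ?kfix // ltnW.
rewrite permM; have [->|im] := eqVneq i m; first by rewrite kgm permK.
have Mi' : (M < i)%nat by rewrite ltn_neqAle Mi andbT -mM eq_sym; exact: im.
by rewrite kfix // -{1}(gfix i Mi') permK.
Qed.

Definition perm_walk n (W : seq ((nat -> nat) * R)) : seq ('S_n * R) :=
  [seq (nat_perm n fp.1, fp.2) | fp <- W].

Lemma perm_walk_point_prob n W (x y : 'I_n) :
  List.Forall (involution_step n) W ->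
  \sum_k subprod_prob (perm_walk n W) k * (k x == y)%:R = walk_prob W x y.
Proof.
elim: W x => [|[f p] W IH] x /=.
  move=> _; rewrite (bigD1 1%g) //= big1 => [|k /negbTE nk1]; last first.
    by rewrite subprod_prob_nil nk1 mul0r.
  by rewrite subprod_prob_nil eqxx perm1 mul1r addr0 val_eqE.
case/List.Forall_cons_iff => fstep Wsteps.
under eq_bigr do rewrite subprod_prob_cons mulrDl -!mulrA.
rewrite big_split -!mulr_sumr /= IH // (reindex_inj (mulgI (nat_perm n f))) /=.
under eq_bigr do rewrite mulKg permM.
have fx_lt : (f x < n)%nat by apply: (involution_step_lt fstep).
have -> : nat_perm n f x = Ordinal fx_lt.
  by apply/val_inj; rewrite /= (nat_permE _ fstep).
by rewrite IH.
Qed.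

Lemma perm_walk_steps n M W : (M <= n)%nat ->
  List.Forall (involution_step M) W ->
  all (fun x => [&& x.1 \in prefix_group n M, #[x.1]%g == 2%nat & 0 <= x.2 <= 1])
    (perm_walk n W).
Proof.
move=> Mn; elim=> //= -[f p] W' fstep _ ->; rewrite andbT.
have fstep_n := involution_stepW Mn fstep.
have fE (i : 'I_n) : nat_perm n f i = f i :> nat := nat_permE i fstep_n.
case: fstep => /= finv ffix [z fz] ->; rewrite andbT.
have z_lt : (z < M)%nat by rewrite ltnNge; apply: contra_notN fz => /ffix.
have f_sq : (nat_perm n f ^+ 2)%g = 1%g.
  by apply/permP => i; apply/val_inj; rewrite /= expgS expg1 permM perm1 !fE finv.
have f_neq1 : nat_perm n f != 1%g.
  apply: contra_notN fz => /eqP f1.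
  have z_n : (z < n)%nat by lia.
  by have := fE (Ordinal z_n); rewrite f1 perm1.
apply/andP; split.
  by apply/prefix_groupP => i Mi; apply/val_inj; rewrite /= fE ffix.
have := order_dvdn (nat_perm n f) 2; rewrite f_sq eqxx.
move=> /(dvdn_leq (ltn0Sn 1)) order_le2.
by rewrite eqn_leq order_le2 order_gt1.
Qed.

(** * The mixing sequence of ['S_n] and its length *)

Fixpoint sym_mixing_seq n m : seq ('S_n * R) :=
  if m is m'.+1 then sym_mixing_seq n m' ++ perm_walk n (mixing_walk m) else [::].

Lemma sym_mixing_seq_steps n m : (m <= n)%nat ->
  all (fun x => (#[x.1]%g == 2%nat) && (0 <= x.2 <= 1)) (sym_mixing_seq n m).
Proof.
elim: m => [|m IH] m_le //=; rewrite all_cat IH ?(ltnW m_le) //=.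
have := perm_walk_steps m_le (mixing_walk_steps (ltn0Sn m)).
by apply: sub_all => x /and3P[_ -> ->].
Qed.

Lemma rcoset_mass_perm_walk n m (g : 'S_n) : (m < n)%nat ->
  \sum_(k in (prefix_group n m :* g)%g) subprod_prob (perm_walk n (mixing_walk m.+1)) k
  = (g \in prefix_group n m.+1)%:R / m.+1%:R.
Proof.
move=> m_lt; set s := perm_walk n _; pose mo : 'I_n := Ordinal m_lt.
have steps := mixing_walk_steps (ltn0Sn m).
have s_in : all (fun x => x.1 \in prefix_group n m.+1) s.
  by apply: sub_all (perm_walk_steps m_lt steps) => x /andP[].
transitivity (\sum_k subprod_prob s k * ((g \in prefix_group n m.+1) && (k mo == g mo))%:R).
  rewrite big_mkcond; apply: eq_bigr => k _.
  have [kH|kH] := boolP (k \in prefix_group n m.+1).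
    rewrite (mem_rcoset_prefix_group g (erefl : val mo = m) kH).
    by case: ifP => _; rewrite ?mulr1 ?mulr0.
  by rewrite (subprod_prob_out s_in kH) mul0r; case: ifP.
have [gH|gH] /= := boolP (g \in prefix_group n m.+1); last first.
  by rewrite big1 ?mul0r // => k _; rewrite mulr0.
rewrite perm_walk_point_prob; last first.
  by apply: List.Forall_impl steps => fp; apply: involution_stepW.
by rewrite walk_prob_mixing_walk // (prefix_group_lt gH) //= mul1r.
Qed.

Lemma sym_mixing_seq_uniform n m : (m <= n)%nat ->
  exists c, forall g,
    subprod_prob (sym_mixing_seq n m) g = c * (g \in prefix_group n m)%:R.
Proof.
elim: m => [|m IH] m_le.
  by exists 1 => g; rewrite /= subprod_prob_nil prefix_group0 mul1r.
have [c unif] := IH (ltnW m_le).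
exists (c / m.+1%:R) => g.
by rewrite /= (subprod_prob_cat_rcoset _ _ unif) rcoset_mass_perm_walk // mulrA mulrAC.
Qed.

Lemma size_sym_mixing_seq n m :
  size (sym_mixing_seq n m) = (\sum_(1 <= M < m.+1) size (mixing_walk M))%nat.
Proof.
elim: m => [|m IH]; first by rewrite big_geq.
by rewrite /= size_cat IH size_map [RHS]big_nat_recr.
Qed.

Local Close Scope ring_scope.

Lemma sum_double_odd (f : nat -> nat) c t :
  f 1 = 0 -> (forall j, 0 < j -> f j.*2 + f j.*2.+1 = (f j).*2 + c) ->
  \sum_(1 <= M < t.*2.+2) f M = (\sum_(1 <= M < t.+1) f M).*2 + c * t.
Proof.
move=> f1 fpair; elim: t => [|t IH]; first by rewrite big_nat1 big_geq // f1 muln0.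
have := fpair t.+1 (ltn0Sn t); rewrite doubleS => fpairS.
rewrite big_nat_recr // big_nat_recr // IH [in RHS]big_nat_recr //=; lia.
Qed.

Lemma size_mixing_walk_even k :
  0 < k -> size (mixing_walk k.*2) = (size (mixing_walk k)).+1.
Proof. by move=> k_gt0; rewrite mixing_walk_even // size_rcons size_map. Qed.

Lemma size_mixing_walk_odd k :
  0 < k -> size (mixing_walk k.*2.+1) = (size (mixing_walk k)).+2.
Proof. by move=> k_gt0; rewrite mixing_walk_odd //= size_mixing_walk_even. Qed.

Lemma trunc_log2_odd k : 0 < k -> trunc_log 2 k.*2.+1 = (trunc_log 2 k).+1.
Proof. by move=> k_gt0; rewrite trunc_log2S /= ?uphalf_double //; lia. Qed.

Lemma sum_size_mixing_walk_le n :
  2 * \sum_(1 <= M < n.+1) size (mixing_walk M) <=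
  3 * \sum_(1 <= M < n.+1) trunc_log 2 M + n.
Proof.
pose A n := \sum_(1 <= M < n.+1) size (mixing_walk M).
pose T n := \sum_(1 <= M < n.+1) trunc_log 2 M.
have A_odd t : A t.*2.+1 = (A t).*2 + 3 * t.
  apply: sum_double_odd => // j j_gt0.
  by rewrite size_mixing_walk_even ?size_mixing_walk_odd //; lia.
have T_odd t : T t.*2.+1 = (T t).*2 + 2 * t.
  apply: sum_double_odd => [|j j_gt0]; first exact: trunc_log1.
  by rewrite trunc_log2_double ?trunc_log2_odd //; lia.
have A_S t : A t.+1 = A t + size (mixing_walk t.+1) by rewrite /A big_nat_recr.
have T_S t : T t.+1 = T t + trunc_log 2 t.+1 by rewrite /T big_nat_recr.
rewrite -/(A n) -/(T n); elim/ltn_ind: n => -[|n] IH; first by rewrite /A /T !big_geq.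
set t := n.+1./2; have t_lt : t < n.+1 by rewrite /t; lia.
have [n_odd|n_even] := boolP (odd n.+1).
  have -> : n.+1 = t.*2.+1 by rewrite /t; lia.
  by have := IH t t_lt; rewrite A_odd T_odd; lia.
have t_gt0 : 0 < t by rewrite /t; lia.
have -> : n.+1 = t.*2 by rewrite /t; lia.
have := IH t t_lt; have := IH t.-1 (leq_ltn_trans (leq_pred t) t_lt).
have := A_S t.*2; have := T_S t.*2; rewrite A_odd T_odd.
rewrite size_mixing_walk_odd // trunc_log2_odd //.
have := A_S t.-1; have := T_S t.-1; rewrite prednK //; lia.
Qed.

Lemma sum_trunc_log_le_fact n :
  \sum_(1 <= M < n.+1) trunc_log 2 M <= trunc_log 2 n`!.
Proof.
apply: trunc_log_max => //; rewrite expn_sum fact_prod.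
rewrite big_nat_cond [X in _ <= X]big_nat_cond.
by apply: leq_prod => M /andP[/andP[M_gt0 _] _]; apply: trunc_logP.
Qed.

Theorem mainTheorem3 (n : nat) : (1 <= n)%N ->
  exists s : seq ('S_n * R),
    mixing_seq s /\ all (fun x => #[x.1]%g == 2%N) s /\
    (2 * size s <= 3 * trunc_log 2 n`! + n)%N.
Proof.
(* The construction also works for [n = 0]. *)
move=> _; exists (sym_mixing_seq n n).
have /allP steps := sym_mixing_seq_steps (leqnn n).
have [c unif] := sym_mixing_seq_uniform (leqnn n).
split; [|split].
- apply: (mixing_seq_const (c := c)) => [x /steps /andP[] //|g].
  by rewrite unif prefix_group_full mulr1.
- by apply/allP => x /steps /andP[].
- rewrite size_sym_mixing_seq.
  have := sum_size_mixing_walk_le n; have := sum_trunc_log_le_fact n; lia.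
Qed.
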